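(* Let $(g,\gamma)$ be a construction pair on an abelian group $(X,+)$ and let $r=r(g,\gamma)$. If the order $|g|$ of the permutation $g$ is finite, then $r$ divides $3|g|$. If moreover $\mathrm{Rad}(\gamma)$ contains no elements of order $3$, then $r$ divides $|g|$.
   Context: A map $\gamma:X\times X\to X$ is symmetric if $\gamma(x,y)=\gamma(y,x)$, alternating if $\gamma(x,x)=0$, biadditive if additive in each argument; $\mathrm{Rad}(\gamma)=\{x\in X:\gamma(x,y)=0\ \forall y\in X\}$. A construction pair on $(X,+)$ is a pair $(g,\gamma)$ with $g$ a permutation of $X$ and $\gamma$ symmetric, alternating, biadditive, such that for all $x,y,z\in X$: (C1) $g^{-1}(g(x)+g(y))=x+y+\gamma(x,y)+g^{-1}(\gamma(x,y))+g^{-2}(\gamma(x,y))$; (C2) $\gamma(\gamma(x,y),z)=0$; (C3) $g^{-1}(\gamma(x,y))=\gamma(g(x),y)$. $r(g,\gamma)$ is the least positive integer $r$ such that $\sum_{0\le k<r}g^k(x)\in\mathrm{Rad}(\gamma)$ for all $x\in X$, or $\infty$ if none exists. *)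

From mathcomp Require Import all_boot all_algebra.
Set Implicit Arguments. Unset Strict Implicit. Unset Printing Implicit Defensive.
Import GRing.Theory.
Local Open Scope ring_scope.

(* A permutation of X is given by a map g together with its two-sided
   inverse ginv (the inverse of a bijection is unique). *)
Definition is_perm_pair (X : Type) (g ginv : X -> X) : Prop :=
  cancel g ginv /\ cancel ginv g.

Definition symmetric_map (X : zmodType) (gam : X -> X -> X) : Prop :=
  forall x y, gam x y = gam y x.

Definition alternating_map (X : zmodType) (gam : X -> X -> X) : Prop :=
  forall x, gam x x = 0.

Definition biadditive (X : zmodType) (gam : X -> X -> X) : Prop :=
  (forall x y z, gam (x + y) z = gam x z + gam y z) /\
  (forall x y z, gam x (y + z) = gam x y + gam x z).

Definition in_Rad (X : zmodType) (gam : X -> X -> X) (x : X) : Prop :=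
  forall y, gam x y = 0.

Definition construction_pair (X : zmodType) (g ginv : X -> X)
  (gam : X -> X -> X) : Prop :=
  is_perm_pair g ginv /\ symmetric_map gam /\ alternating_map gam /\
      biadditive gam /\
      (forall x y, ginv (g x + g y) =
         x + y + gam x y + ginv (gam x y) + ginv (ginv (gam x y))) /\
      (forall x y z, gam (gam x y) z = 0) /\
      (forall x y, ginv (gam x y) = gam (g x) y).

Definition perm_order (X : Type) (g : X -> X) (n : nat) : Prop :=
  (0 < n)%N /\ (forall x, iter n g x = x) /\
  (forall m, (0 < m)%N -> (forall x, iter m g x = x) -> (n <= m)%N).

Definition rad_sum_prop (X : zmodType) (g : X -> X) (gam : X -> X -> X)
  (r : nat) : Prop :=
  forall x, in_Rad gam (\sum_(k < r) iter k g x).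

Definition is_r (X : zmodType) (g : X -> X) (gam : X -> X -> X)
  (r : nat) : Prop :=
  (0 < r)%N /\ rad_sum_prop g gam r /\
  (forall m, (0 < m)%N -> rad_sum_prop g gam m -> (r <= m)%N).

Definition has_order3 (X : zmodType) (x : X) : Prop :=
  x != 0 /\ x *+ 3 = 0.

From mathcomp Require Import all_boot all_algebra.
From mathcomp Require Import zify.
From Stdlib Require Import Classical Wf_nat.
Set Implicit Arguments. Unset Strict Implicit. Unset Printing Implicit Defensive.
Import GRing.Theory.
Local Open Scope ring_scope.

(* Let S_k(x) = sum_{j<k} g^j(x) denote the orbit sums of g.  The proof has
   two independent halves.
   (1) Divisibility.  For a biadditive gamma and a bijective g, the set of
       m with S_m(x) in Rad(gamma) for all x is closed under "m mod r": by
       S_{a+b}(x) = S_a(x) + S_b(g^a x) it is closed under multiples and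
       under removing a summand.  Hence r(g,gamma) divides every such m.
   (2) Twisted additivity.  For a construction pair, induction on m from
       (C1), (C2), (C3) gives
            g^m(a) + g^m(b) = g^m(a + b + gamma(S_{3m}(a), b)).
       If g^n = id this forces gamma(S_{3n}(a), b) = 0, i.e. 3|g| has the
       radical property, so r(g,gamma) exists and divides 3|g|.  Moreover
       S_{3n} = 3 S_n when g^n = id, so gamma(S_n(a), b) is an element of
       Rad(gamma) killed by 3; without elements of order 3 in Rad(gamma) it
       vanishes, hence |g| has the radical property and r divides |g|. *)

Section Biadditive.
Variables (X : zmodType) (gam : X -> X -> X).
Hypothesis gamB : biadditive gam.

Lemma gam0l y : gam 0 y = 0.
Proof.
by apply: (@addrI _ (gam 0 y)); rewrite -gamB.1 !addr0.
Qed.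

Lemma gam0r x : gam x 0 = 0.
Proof.
by apply: (@addrI _ (gam x 0)); rewrite -gamB.2 !addr0.
Qed.

Lemma gamMnl x y k : gam (x *+ k) y = gam x y *+ k.
Proof. by elim: k => [|k IH]; rewrite ?gam0l // !mulrS gamB.1 IH. Qed.

Lemma Rad_add u v : in_Rad gam u -> in_Rad gam v -> in_Rad gam (u + v).
Proof. by move=> Ru Rv y; rewrite gamB.1 (Ru y) (Rv y) addr0. Qed.

Lemma Rad_addl_inv u v : in_Rad gam u -> in_Rad gam (u + v) -> in_Rad gam v.
Proof. by move=> Ru Ruv y; have := Ruv y; rewrite gamB.1 (Ru y) add0r. Qed.

End Biadditive.

Section OrbitSums.
Variables (X : zmodType) (g ginv : X -> X) (gam : X -> X -> X).
Hypotheses (gamB : biadditive gam) (ginvK : cancel ginv g).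

Definition orbit_sum (k : nat) (x : X) : X := \sum_(j < k) iter j g x.

Lemma orbit_sumD a b x :
  orbit_sum (a + b) x = orbit_sum a x + orbit_sum b (iter a g x).
Proof.
rewrite /orbit_sum big_split_ord /=; congr (_ + _).
by apply: eq_bigr => j _; rewrite addnC iterD.
Qed.

Lemma orbit_sum_period n k x :
  iter n g x = x -> orbit_sum (k * n) x = orbit_sum n x *+ k.
Proof.
move=> gnx; elim: k => [|k IH]; first by rewrite /orbit_sum big_ord0.
by rewrite mulSn orbit_sumD gnx IH mulrS.
Qed.

Lemma iter_ginvK k : cancel (iter k ginv) (iter k g).
Proof. by elim: k => [|k IH] z //; rewrite [iter k.+1 ginv z]iterSr iterS IH ginvK. Qed.

Lemma rad_sum_mul r q : rad_sum_prop g gam r -> rad_sum_prop g gam (q * r).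
Proof.
move=> Rr; elim: q => [|q IH] x; first by move=> y; rewrite big_ord0 (gam0l gamB).
rewrite mulSn; change (in_Rad gam (orbit_sum (r + q * r) x)).
by rewrite orbit_sumD; apply: (Rad_add gamB); [apply: Rr | apply: IH].
Qed.

(* Removing a radical length: here the surjectivity of g^a is needed. *)
Lemma rad_sum_subl a b :
  rad_sum_prop g gam a -> rad_sum_prop g gam (a + b) -> rad_sum_prop g gam b.
Proof.
move=> Ra Rab w; have := Rab (iter a ginv w).
change (in_Rad gam (orbit_sum (a + b) (iter a ginv w)) -> in_Rad gam (orbit_sum b w)).
rewrite orbit_sumD iter_ginvK; exact: (Rad_addl_inv gamB (Ra _)).
Qed.

Lemma rad_sum_mod r m :
  rad_sum_prop g gam r -> rad_sum_prop g gam m -> rad_sum_prop g gam (m %% r).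
Proof.
move=> Rr Rm; apply: (rad_sum_subl (rad_sum_mul (m %/ r) Rr)).
by rewrite -divn_eq.
Qed.

Lemma is_r_dvd r m :
  is_r g gam r -> rad_sum_prop g gam m -> (r %| m)%N.
Proof.
move=> [r_gt0 [Rr r_min]] Rm; rewrite /dvdn.
have Rmod := rad_sum_mod Rr Rm.
case: posnP => [// | mod_gt0].
by have := r_min _ mod_gt0 Rmod; rewrite leqNgt ltn_pmod.
Qed.

End OrbitSums.

Lemma is_r_exists (X : zmodType) (g : X -> X) (gam : X -> X -> X) m :
  (0 < m)%N -> rad_sum_prop g gam m -> exists r, is_r g gam r.
Proof.
move=> m_gt0 Rm.
pose P k := (0 < k)%N /\ rad_sum_prop g gam k.
have [r [[[r_gt0 Rr] r_min] _]] : has_unique_least_element le P.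
  by apply: dec_inh_nat_subset_has_unique_least_element;
    [move=> k; apply: classic | exists m].
exists r; split=> //; split=> // k k_gt0 Rk; apply/leP; exact: r_min.
Qed.

Section ConstructionPair.
Variables (X : zmodType) (g ginv : X -> X) (gam : X -> X -> X).
Hypothesis cp : construction_pair g ginv gam.

Let gK : cancel g ginv. Proof. by case: cp => [[]]. Qed.
Let ginvK : cancel ginv g. Proof. by case: cp => [[]]. Qed.
Let gamC : symmetric_map gam. Proof. by case: cp => [_ []]. Qed.
Let gamB : biadditive gam. Proof. by case: cp => [_ [_ [_ []]]]. Qed.

(* (C1) after applying g. *)
Let gD_twisted a b :
  g a + g b = g (a + b + gam a b + ginv (gam a b) + ginv (ginv (gam a b))).
Proof. by case: cp => [_ [_ [_ [_ [C1 _]]]]]; rewrite -C1 ginvK. Qed.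

Lemma gam_rad a b : in_Rad gam (gam a b).
Proof. by case: cp => [_ [_ [_ [_ [_ [C2 _]]]]]]. Qed.

Let ginv_gam x y : ginv (gam x y) = gam (g x) y.
Proof. by case: cp => [_ [_ [_ [_ [_ [_ C3]]]]]]. Qed.

Lemma ginv0 : ginv 0 = 0.
Proof. by have := ginv_gam 0 0; rewrite (gam0l gamB) (gam0r gamB). Qed.

Lemma g0 : g 0 = 0.
Proof. by rewrite -{1}ginv0 ginvK. Qed.

Lemma gD_rad u v : in_Rad gam u -> g (u + v) = g u + g v.
Proof. by move=> Ru; rewrite gD_twisted (Ru v) !ginv0 !addr0. Qed.

Lemma gDr_rad u v : in_Rad gam v -> g (u + v) = g u + g v.
Proof. by move=> Rv; rewrite addrC gD_rad // addrC. Qed.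

Lemma ginvD_rad u v : in_Rad gam (ginv u) -> ginv (u + v) = ginv u + ginv v.
Proof. by move=> Ru; apply: (can_inj gK); rewrite gD_rad // !ginvK. Qed.

Lemma g_rad u : in_Rad gam u -> in_Rad gam (g u).
Proof. by move=> Ru y; rewrite -ginv_gam (Ru y) ginv0. Qed.

Lemma ginv_rad u : in_Rad gam u -> in_Rad gam (ginv u).
Proof.
move=> Ru y; have := ginv_gam (ginv u) y; rewrite ginvK (Ru y) => e.
by rewrite -[gam _ _]ginvK e g0.
Qed.

Lemma iter_g_rad k u : in_Rad gam u -> in_Rad gam (iter k g u).
Proof. by elim: k => [|k IH] //= Ru; apply/g_rad/IH. Qed.

Lemma iter_ginv_rad k u : in_Rad gam u -> in_Rad gam (iter k ginv u).
Proof. by elim: k => [|k IH] //= Ru; apply/ginv_rad/IH. Qed.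

Lemma iter_gD_rad k u v : in_Rad gam v -> iter k g (u + v) = iter k g u + iter k g v.
Proof.
move=> Rv; elim: k => [|k IH] //=.
by rewrite IH gDr_rad //; apply: iter_g_rad.
Qed.

Lemma iter_ginvD_rad k u v :
  in_Rad gam u -> iter k ginv (u + v) = iter k ginv u + iter k ginv v.
Proof.
move=> Ru; elim: k => [|k IH] //=.
by rewrite IH ginvD_rad //; apply/ginv_rad/iter_ginv_rad.
Qed.

Lemma gam_iterl k u v : gam (iter k g u) v = iter k ginv (gam u v).
Proof. by elim: k => [|k IH] //=; rewrite -ginv_gam IH. Qed.

Lemma gam_iter_swap k u v : gam u (iter k g v) = gam (iter k g u) v.
Proof.
elim: k u => [|k IH] u //.
by rewrite iterS gamC -ginv_gam gamC IH ginv_gam -iterS.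
Qed.

Lemma gam_iter3 m a b :
  gam (iter (3 * m) g a) b = iter m ginv (gam (iter m g a) (iter m g b)).
Proof.
have -> : (3 * m = m + m + m)%N by lia.
by rewrite iterD iterD -gam_iter_swap gam_iterl.
Qed.

Lemma iter_g_twisted m a b :
  iter m g a + iter m g b = iter m g (a + b + gam (orbit_sum g (3 * m) a) b).
Proof.
elim: m => [|m IH]; first by rewrite muln0 /orbit_sum big_ord0 (gam0l gamB) addr0.
set c := gam (iter m g a) (iter m g b).
set w := c + ginv c + ginv (ginv c).
have Rc : in_Rad gam c := gam_rad _ _.
have Rw : in_Rad gam w.
  by apply: (Rad_add gamB); [apply: (Rad_add gamB) |]; do ?apply: ginv_rad.
have new_terms : gam (orbit_sum g 3 (iter (3 * m) g a)) b = iter m ginv w.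
  rewrite /orbit_sum !big_ord_recr big_ord0 /= add0r !gamB.1 -!ginv_gam.
  rewrite gam_iter3 -/c -!iterS !iterSr /w !iter_ginvD_rad //.
  by do ?[apply: (Rad_add gamB) | apply: ginv_rad].
have split_sum : a + b + gam (orbit_sum g (3 * m.+1) a) b
    = a + b + gam (orbit_sum g (3 * m) a) b + iter m ginv w.
  by rewrite mulnS addnC orbit_sumD gamB.1 new_terms addrA.
rewrite !iterS split_sum iter_gD_rad; last exact: iter_ginv_rad.
by rewrite (iter_ginvK ginvK) -IH gD_twisted -/c /w !addrA.
Qed.

Lemma rad_sum_three_period n :
  (forall x, iter n g x = x) -> rad_sum_prop g gam (3 * n).
Proof.
move=> gn x y; apply: (@addrI _ (x + y)).
by have := iter_g_twisted n x y; rewrite !gn addr0 => <-.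
Qed.

End ConstructionPair.

Theorem mainTheorem3 (X : zmodType) (g ginv : X -> X) (gam : X -> X -> X)
  (n : nat) :
  construction_pair g ginv gam ->
  perm_order g n ->
  (exists r, is_r g gam r /\ (r %| 3 * n)%N) /\
  ((forall x, in_Rad gam x -> ~ has_order3 x) ->
   exists r, is_r g gam r /\ (r %| n)%N).
Proof.
move=> cp [n_gt0 [gn _]].
have gamB : biadditive gam by case: cp => [_ [_ [_ []]]].
have ginvK : cancel ginv g by case: cp => [[]].
have R3n := rad_sum_three_period cp gn.
have [r is_r_r] : exists r, is_r g gam r.
  by apply: (is_r_exists _ R3n); rewrite muln_gt0 n_gt0.
split; first by exists r; split=> //; apply: (is_r_dvd gamB ginvK is_r_r R3n).
move=> no_order3; exists r; split=> //; apply: (is_r_dvd gamB ginvK is_r_r) => x y.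
(* t = gamma(S_n x, y) is radical and 3 t = gamma(S_{3n} x, y) = 0. *)
set t := gam (orbit_sum g n x) y.
have t3 : t *+ 3 = 0.
  by rewrite -gamMnl // -orbit_sum_period //; apply: R3n.
case: (eqVneq t 0) => // t_neq0; exfalso.
by apply: (no_order3 t (gam_rad cp _ _)); split.
Qed.
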